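(* Let $n_1,n_2,n_3\in\mathbb{N}$, let $\sigma$ be a segment label map on $G=\{1,\dots,n_1\}\times\{1,\dots,n_2\}\times\{1,\dots,n_3\}$, fix any decomposition of $T$ into blocks, let $\tau=\mathrm{LABEL}(\sigma,T)$ and let $\tau'$ be the output of the block-wise method. Then for all 0-cells $t\in T$: $\tau(t)\neq0\Rightarrow\tau'(t)\neq0$.
   Context: Voxel grid and segmentation: $G=\{1,\dots,n_1\}\times\{1,\dots,n_2\}\times\{1,\dots,n_3\}$; voxels $v,w$ are adjacent iff $\sum_i|v_i-w_i|=1$. A segment label map is $\sigma:G\to\mathbb{N}=\{1,2,\dots\}$ such that each level set $\sigma^{-1}(l)$ is connected w.r.t. this adjacency. Topological grid: $T=\{1,\dots,2n_1-1\}\times\{1,\dots,2n_2-1\}\times\{1,\dots,2n_3-1\}$; a cell with exactly $j$ odd coordinates is a $j$-cell. Voxel $r$ corresponds to the 3-cell $2r-1$. Two cells are 6-neighbors if they differ by $1$ in exactly one coordinate. For a $j$-cell $t$, $\Gamma(t)$ is the set of 6-neighbors of $t$ in $T$ that are $(j+1)$-cells. Cells $t_1,t_2$ are connected, $t_1\leftrightarrow t_2$, iff there is $t\in T$ with $t_1,t_2\in\Gamma(t)$. Procedure LABEL: for a voxel box $\prod_i\{a_i,\dots,b_i\}\subseteq G$ let $B=\prod_i\{2a_i-1,\dots,2b_i-1\}$ be its cell box. $\mathrm{LABEL}(\sigma,B)$ produces $\lambda:B\to\mathbb{N}_0$: (1) $\lambda(2r-1)=\sigma(r)$ for 3-cells.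 (2) For $j=2,1,0$ in this order: for each $j$-cell $t\in B$ let $\theta(t)$ be the set of positive integers occurring exactly once in $(\lambda(s))_{s\in\Gamma(t)}$; $t$ is active iff $\theta(t)\ne\emptyset$, inactive $j$-cells get label $0$; the active $j$-cells of $B$ are partitioned into maximal sets of cells with equal $\theta$ that are connected by $\leftrightarrow$-paths inside the set; these classes are numbered $1,\dots,m_j(B)$ arbitrarily and each active $j$-cell gets its class number. Reference labeling: $\tau=\mathrm{LABEL}(\sigma,T)$. Block-wise method: for each axis $i$ choose odd integers $1=a^i_0<\dots<a^i_{m_i}=2n_i-1$; blocks are the boxes $\prod_i\{a^i_{k_i-1},\dots,a^i_{k_i}\}$. Step 1: $\lambda_B=\mathrm{LABEL}(\sigma,B)$ for each block. Step 2: with blocks ordered $B_1,\dots,B_K$, add offset $\sum_{k'<k}m_j(B_{k'})$ to each positive $j$-cell label of $\lambda_{B_k}$ ($j\in\{0,1,2\}$). Step 3: for $j\in\{1,2\}$, via union–find, unite the labels received in different blocks by any active $j$-cell lying in several blocks, and replace every positive $j$-cell label by its set representative. Step 4: for each 0-cell $t_0$ and each pair of distinct 1-cell labels occurring exactly once among the current labels of $\Gamma(t_0)$, merge the two labels if the corresponding 1-cells bound the same set of current 2-cell labels; if any merge took place at $t_0$, recompute the activity of $t_0$ and set its label to $0$ if inactive. The result is $\tau':T\to\mathbb{N}_0$. *)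

From Stdlib Require Import Relations.
From mathcomp Require Import all_boot.
Set Implicit Arguments. Unset Strict Implicit. Unset Printing Implicit Defensive.

(* A point of Z^3 with natural coordinates; used both for voxels r in G
   and for cells t in the topological grid T. *)
Definition cell := (nat * nat * nat)%type.
Definition cx (t : cell) : nat := t.1.1.
Definition cy (t : cell) : nat := t.1.2.
Definition cz (t : cell) : nat := t.2.

Definition absdiff (a b : nat) : nat := (a - b) + (b - a).

Definition adj (v w : cell) : bool :=
  absdiff (cx v) (cx w) + absdiff (cy v) (cy w) + absdiff (cz v) (cz w) == 1.

(* a cell with exactly j odd coordinates is a j-cell *)
Definition cdim (t : cell) : nat := odd (cx t) + odd (cy t) + odd (cz t).

Definition in_G (n1 n2 n3 : nat) (r : cell) : bool :=
  [&& 1 <= cx r <= n1, 1 <= cy r <= n2 & 1 <= cz r <= n3].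

Definition segment_label_map (n1 n2 n3 : nat) (sigma : cell -> nat) : Prop :=
  (forall r, in_G n1 n2 n3 r -> 0 < sigma r) /\
  (forall r r', in_G n1 n2 n3 r -> in_G n1 n2 n3 r' -> sigma r = sigma r' ->
     clos_refl_trans cell
       (fun a b => [/\ in_G n1 n2 n3 a, in_G n1 n2 n3 b,
                       sigma a = sigma r, sigma b = sigma r & adj a b]) r r').

Definition box := (cell * cell)%type.
Definition in_box (B : box) (t : cell) : bool :=
  [&& cx B.1 <= cx t <= cx B.2, cy B.1 <= cy t <= cy B.2 & cz B.1 <= cz t <= cz B.2].

Definition Tbox (n1 n2 n3 : nat) : box :=
  ((1, 1, 1), ((2 * n1).-1, (2 * n2).-1, (2 * n3).-1)).
Definition in_T (n1 n2 n3 : nat) (t : cell) : bool := in_box (Tbox n1 n2 n3) t.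

Definition Gamma (n1 n2 n3 : nat) (t s : cell) : Prop :=
  [/\ in_T n1 n2 n3 s, cdim s = (cdim t).+1 & adj t s].

Definition cconnected (n1 n2 n3 : nat) (t1 t2 : cell) : Prop :=
  exists t, [/\ in_T n1 n2 n3 t, Gamma n1 n2 n3 t t1 & Gamma n1 n2 n3 t t2].

(* the voxel r whose 3-cell is 2r-1 *)
Definition voxel_of (t : cell) : cell :=
  ((cx t).+1./2, (cy t).+1./2, (cz t).+1./2).

(* Procedure LABEL(sigma, B), specified relationally: since the class *)
(* numbering is arbitrary, LABEL_spec holds for every admissible      *)
(* output lambda (restricted to B) together with the class counts m j *)
Section Label.
Variables (n1 n2 n3 : nat) (B : box) (lam : cell -> nat).

Definition occurs_once (t : cell) (l : nat) : Prop :=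
  exists s, [/\ Gamma n1 n2 n3 t s, in_box B s, lam s = l &
    forall s', Gamma n1 n2 n3 t s' -> in_box B s' -> lam s' = l -> s' = s].

Definition theta (t : cell) (l : nat) : Prop := 0 < l /\ occurs_once t l.
Definition active (t : cell) : Prop := exists l, theta t l.
Definition same_theta (t t' : cell) : Prop := forall l, theta t l <-> theta t' l.

Definition class_step (j : nat) (a b : cell) : Prop :=
  in_box B a /\ in_box B b /\ cdim a = j /\ cdim b = j /\
  active a /\ active b /\ same_theta a b /\ cconnected n1 n2 n3 a b.

End Label.

Definition LABEL_spec (n1 n2 n3 : nat) (sigma : cell -> nat) (B : box)
    (lam : cell -> nat) (m : nat -> nat) : Prop :=
  (forall t, in_box B t -> cdim t = 3 -> lam t = sigma (voxel_of t)) /\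
  (forall j, j < 3 ->
     [/\ (forall t, in_box B t -> cdim t = j ->
            ~ active n1 n2 n3 B lam t -> lam t = 0),
         (forall t, in_box B t -> cdim t = j ->
            active n1 n2 n3 B lam t -> 1 <= lam t <= m j),
         (forall k, 1 <= k <= m j -> exists t,
            [/\ in_box B t, cdim t = j, active n1 n2 n3 B lam t & lam t = k]) &
         (forall t t', in_box B t -> in_box B t' -> cdim t = j -> cdim t' = j ->
            active n1 n2 n3 B lam t -> active n1 n2 n3 B lam t' ->
            (lam t = lam t' <->
               clos_refl_trans cell (class_step n1 n2 n3 B lam j) t t'))]).

Definition valid_breaks (nn : nat) (a : seq nat) : Prop :=
  [/\ head 0 a = 1, last 0 a = (2 * nn).-1, sorted ltn a & all odd a].

Definition intervals (a : seq nat) : seq (nat * nat) := zip a (behead a).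

Definition blocks (a1 a2 a3 : seq nat) : seq box :=
  flatten [seq flatten [seq [seq ((i.1, j.1, k.1), (i.2, j.2, k.2))
                              | k <- intervals a3]
                         | j <- intervals a2]
           | i <- intervals a1].

Definition box0 : box := ((0, 0, 0), (0, 0, 0)).

(* Step 4 (sequential over the 0-cells in the order ord).              *)
(* c3 : current labels after step 3; E : current union-find            *)
(* equivalence on 1-cell labels; lab : current 0-cell labels.          *)
Section Step4.
Variables (n1 n2 n3 : nat) (c3 : cell -> nat).

Definition once1 (E : nat -> nat -> Prop) (t0 s : cell) : Prop :=
  [/\ Gamma n1 n2 n3 t0 s, 0 < c3 s &
      forall s', Gamma n1 n2 n3 t0 s' -> 0 < c3 s' -> E (c3 s) (c3 s') -> s' = s].

Definition bound2 (s : cell) (l : nat) : Prop :=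
  exists u, [/\ Gamma n1 n2 n3 s u, 0 < c3 u & c3 u = l].

Definition mergepair (E : nat -> nat -> Prop) (t0 : cell) (a b : nat) : Prop :=
  exists s s', once1 E t0 s /\ once1 E t0 s' /\ ~ E (c3 s) (c3 s') /\
               a = c3 s /\ b = c3 s' /\ (forall l, bound2 s l <-> bound2 s' l).

Definition merged (E : nat -> nat -> Prop) (t0 : cell) : Prop :=
  exists a b, mergepair E t0 a b.

Definition Enext (E : nat -> nat -> Prop) (t0 : cell) : nat -> nat -> Prop :=
  clos_refl_sym_trans nat (fun a b => E a b \/ mergepair E t0 a b).

Definition active0 (E : nat -> nat -> Prop) (t0 : cell) : Prop :=
  exists s, once1 E t0 s.

Inductive step4 : (nat -> nat -> Prop) -> (cell -> nat) -> seq cell -> (cell -> nat) -> Prop :=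
| Step4Nil E lab : step4 E lab [::] lab
| Step4Cons E lab t0 ord v lab' :
    (merged E t0 -> active0 (Enext E t0) t0 -> v = lab t0) ->
    (merged E t0 -> ~ active0 (Enext E t0) t0 -> v = 0) ->
    (~ merged E t0 -> v = lab t0) ->
    step4 (Enext E t0) (fun t => if t == t0 then v else lab t) ord lab' ->
    step4 E lab (t0 :: ord) lab'.

End Step4.

(* The block-wise method: tau' is a possible output for the            *)
(* breakpoints a1 a2 a3 (all arbitrary choices quantified).           *)
Definition blockwise_output (n1 n2 n3 : nat) (sigma : cell -> nat)
    (a1 a2 a3 : seq nat) (tau' : cell -> nat) : Prop :=
  exists (bl : seq box) (lams : nat -> cell -> nat) (ms : nat -> nat -> nat)
         (rep : nat -> nat -> nat) (blk : cell -> nat) (ord : seq cell),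
  let K := size bl in
  (* Step 2: offset labels received by cell t in block k *)
  let off k j := \sum_(0 <= i < k) ms i j in
  let L k t := if 0 < lams k t then off k (cdim t) + lams k t else 0 in
  (* Step 3: union-find equivalence on j-cell labels *)
  let unite j a b := exists t k k',
      cdim t = j /\ k < K /\ k' < K /\ in_box (nth box0 bl k) t /\
      in_box (nth box0 bl k') t /\ 0 < lams k t /\ 0 < lams k' t /\
      a = L k t /\ b = L k' t in
  let E j := clos_refl_sym_trans nat (unite j) in
  let c3 t := let v := L (blk t) t in
              if (cdim t == 1) || (cdim t == 2) then
                (if v == 0 then 0 else rep (cdim t) v) else v in
      perm_eq bl (blocks a1 a2 a3) /\
      (forall k, k < K -> LABEL_spec n1 n2 n3 sigma (nth box0 bl k) (lams k) (ms k)) /\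
      (forall j l, (j == 1) || (j == 2) -> 0 < l ->
         E j l (rep j l) /\ forall l', 0 < l' -> E j l l' -> rep j l = rep j l') /\
      (* a cell lying in several blocks takes its label from one of them *)
      (forall t, in_T n1 n2 n3 t -> cdim t < 3 ->
         blk t < K /\ in_box (nth box0 bl (blk t)) t) /\
      uniq ord /\ (forall t, t \in ord = in_T n1 n2 n3 t && (cdim t == 0)) /\
      step4 n1 n2 n3 c3 eq c3 ord tau'.

(* Blocks have odd bounds, so each block contains the whole Gamma-neighbourhood of each of its
   cells of dimension < 3 and LABEL on a block sees the same 3-cell labels as LABEL on T.
   Descending through dimensions 2 and 1, a block cell is active iff it is active in tau, and
   equal block labels force equal tau labels. Consequently every label after Steps 2-3 stands
   for a unique tau label, and a 0-cell active in tau is active in its block, so it gets a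
   positive label. In Step 4 two 1-cells bounding the same 2-cell labels have equal theta,
   because around an active 1-cell distinct 2-cells carry distinct tau labels (a 4-cycle
   argument on the surrounding voxels); hence they have equal tau labels, merges never
   identify distinct tau labels, and the 1-cell that makes a 0-cell active in tau keeps a
   label occurring once: the 0-cell is never reset to 0. *)

From Stdlib Require Import Relations Classical.
From mathcomp Require Import all_boot zify.
Set Implicit Arguments. Unset Strict Implicit. Unset Printing Implicit Defensive.

Definition get (i : nat) (t : cell) : nat :=
  if i == 0 then cx t else if i == 1 then cy t else cz t.
Definition upd (i : nat) (t : cell) (v : nat) : cell :=
  if i == 0 then (v, cy t, cz t) else if i == 1 then (cx t, v, cz t) else (cx t, cy t, v).

Lemma get_upd i j t v : i < 3 -> j < 3 ->
  get i (upd j t v) = if i == j then v else get i t.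
Proof. by case: i => [|[|[|]]] //; case: j => [|[|[|]]]. Qed.

Lemma get_upd_id i t v : i < 3 -> get i (upd i t v) = v.
Proof. by move=> hi; rewrite get_upd // eqxx. Qed.

Lemma cell_ext t t' : (forall i, i < 3 -> get i t = get i t') -> t = t'.
Proof.
case: t => [[x y] z]; case: t' => [[x' y'] z'] H.
by move: (H 0 erefl) (H 1 erefl) (H 2 erefl); rewrite /get /cx /cy /cz /= => -> -> ->.
Qed.

Lemma updC j k t a b : j < 3 -> k < 3 -> j != k ->
  upd j (upd k t b) a = upd k (upd j t a) b.
Proof.
move=> hj hk ne; apply: cell_ext => i hi; rewrite !get_upd //.
by case: (eqVneq i j) => [eij|//]; case: (eqVneq i k) => // eik; rewrite -eij eik eqxx in ne.
Qed.

Lemma cdimE t : cdim t = odd (get 0 t) + odd (get 1 t) + odd (get 2 t).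
Proof. by []. Qed.

Lemma cdim_upd i t v : i < 3 -> cdim (upd i t v) + odd (get i t) = cdim t + odd v.
Proof. by case: i => [|[|[|]]] // _; rewrite /cdim /upd /get /=; lia. Qed.

Lemma adjP v w : adj v w ->
  exists2 i, i < 3 & w = upd i v (get i w) /\ absdiff (get i v) (get i w) = 1.
Proof.
case: v => [[x y] z]; case: w => [[x' y'] z'].
rewrite /adj /absdiff /cx /cy /cz /= => /eqP h.
have [[? ?]|[[? ?]|[? ?]]] : (y' = y /\ z' = z) \/ (x' = x /\ z' = z) \/ (x' = x /\ y' = y)
  by lia.
- by exists 0; subst; rewrite /upd /get /cx /cy /cz /=; split=> //; lia.
- by exists 1; subst; rewrite /upd /get /cx /cy /cz /=; split=> //; lia.
- by exists 2; subst; rewrite /upd /get /cx /cy /cz /=; split=> //; lia.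
Qed.

Lemma GammaP n1 n2 n3 t s : Gamma n1 n2 n3 t s ->
  exists2 i, i < 3 & ~~ odd (get i t) /\
    (s = upd i t (get i t).+1 \/ (0 < get i t /\ s = upd i t (get i t).-1)).
Proof.
case=> _ hd /adjP [i hi]; move: (get i s) => x [es]; rewrite /absdiff => hx; subst s.
exists i => //.
have heven : ~~ odd (get i t).
  apply/negP => og; move: (cdim_upd t x hi) hd; rewrite og.
  by case: (odd x); lia.
split=> //.
have [->|<-] : x = (get i t).+1 \/ x.+1 = get i t by lia.
- by left.
- by right.
Qed.

Lemma Gamma_cdim n1 n2 n3 s u : Gamma n1 n2 n3 s u -> cdim u = (cdim s).+1.
Proof. by case. Qed.

Lemma Gamma_in_T n1 n2 n3 s u : Gamma n1 n2 n3 s u -> in_T n1 n2 n3 u.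
Proof. by case. Qed.

Lemma in_box_get B t : in_box B t <-> forall i, i < 3 -> get i B.1 <= get i t <= get i B.2.
Proof.
split; first by case/and3P=> h0 h1 h2 [|[|[|]]].
by move=> H; apply/and3P; split; [apply: (H 0)|apply: (H 1)|apply: (H 2)].
Qed.

Lemma adj_upd i t v : i < 3 -> absdiff (get i t) v = 1 -> adj t (upd i t v).
Proof. by case: i => [|[|[|]]] // _; rewrite /adj /upd /get /absdiff /cx /cy /cz /=; lia. Qed.

Record odd_box (B : box) : Prop :=
  OddBox { odd_box_coord : forall i, i < 3 -> odd (get i B.1) /\ odd (get i B.2) }.

Section OddBox.
Variables (B : box) (t : cell) (i : nat).
Hypotheses (oddB : odd_box B) (tB : in_box B t) (lt_i3 : i < 3) (ti_even : ~~ odd (get i t)).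

Lemma even_coord_inner : get i B.1 < get i t < get i B.2.
Proof.
have [o1 o2] := odd_box_coord oddB lt_i3; have /andP [l u] := proj1 (in_box_get B t) tB i lt_i3.
have ne1 : get i B.1 != get i t by apply: contraNneq ti_even => <-.
have ne2 : get i t != get i B.2 by apply: contraNneq ti_even => ->.
by rewrite !ltn_neqAle ne1 ne2 l u.
Qed.

Lemma even_coord_pos : 0 < get i t.
Proof. by case/andP: even_coord_inner => /(leq_ltn_trans (leq0n _)). Qed.

Lemma upd_in_odd_box v : absdiff (get i t) v = 1 -> in_box B (upd i t v).
Proof.
rewrite /absdiff => hv; apply/in_box_get => j hj; rewrite get_upd //.
case: eqP => [->|_]; last exact: (proj1 (in_box_get B t) tB).
by have := even_coord_inner; lia.
Qed.

End OddBox.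

Lemma Gamma_odd_box n1 n2 n3 B t s :
  odd_box B -> in_box B t -> Gamma n1 n2 n3 t s -> in_box B s.
Proof.
move=> oddB tB /GammaP [i hi [ev [->|[pos ->]]]]; apply: upd_in_odd_box => //;
  rewrite /absdiff; lia.
Qed.

Lemma Tbox_odd n1 n2 n3 t : in_T n1 n2 n3 t -> odd_box (Tbox n1 n2 n3).
Proof.
move/in_box_get=> tT.
have ob n x : 1 <= x <= (2 * n).-1 -> odd (2 * n).-1.
  case: n => [|n]; first by rewrite muln0 => /andP[/leq_trans h /h].
  by rewrite -subn1 oddB ?muln_gt0 // oddM.
by constructor; case=> [|[|[|]]] // hi; split=> //; apply: ob (tT _ hi).
Qed.

Lemma Gamma_upd n1 n2 n3 t i : in_T n1 n2 n3 t -> i < 3 -> ~~ odd (get i t) ->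
  Gamma n1 n2 n3 t (upd i t (get i t).+1) /\ Gamma n1 n2 n3 t (upd i t (get i t).-1).
Proof.
move=> tT hi ev; have oT := Tbox_odd tT; have pos := even_coord_pos oT tT hi ev.
have d1 : absdiff (get i t) (get i t).+1 = 1 by rewrite /absdiff; lia.
have d2 : absdiff (get i t) (get i t).-1 = 1 by rewrite /absdiff; lia.
have cd v : odd v -> cdim (upd i t v) = (cdim t).+1.
  by move=> ov; move: (cdim_upd t v hi); rewrite ov (negbTE ev); lia.
split; split; try exact: upd_in_odd_box; try exact: adj_upd.
- by rewrite cd //= ev.
- by rewrite cd //; move: ev pos; case: (get i t) => //= g; rewrite negbK.
Qed.

Lemma mem_zip_fst_snd (T1 T2 : eqType) (s : seq T1) (u : seq T2) x y :
  (x, y) \in zip s u -> x \in s /\ y \in u.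
Proof.
elim: s u => [|a s IH] [|b u] //=; rewrite in_cons => /orP [/eqP [-> ->]|/IH [h1 h2]].
- by split; apply: mem_head.
- by rewrite !in_cons h1 h2 !orbT.
Qed.

Lemma blocks_odd a1 a2 a3 B : all odd a1 -> all odd a2 -> all odd a3 ->
  B \in blocks a1 a2 a3 -> odd_box B.
Proof.
have ends a p : all odd a -> p \in intervals a -> odd p.1 /\ odd p.2.
  by case: p => x y /allP oa /mem_zip_fst_snd [/oa ? /mem_behead /oa ?].
move=> o1 o2 o3 /flatten_mapP [i /(ends _ _ o1) [? ?] /flatten_mapP [j /(ends _ _ o2) [? ?]]].
by case/mapP=> k /(ends _ _ o3) [? ?] ->; constructor; case=> [|[|[|]]].
Qed.

Lemma clos_rt_mono (A : Type) (R R' : relation A) x y :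
  (forall a b, R a b -> R' a b) -> clos_refl_trans A R x y -> clos_refl_trans A R' x y.
Proof.
move=> sub; elim=> [a b /sub|a|a b c _ h1 _ h2];
  [exact: rt_step|exact: rt_refl|exact: rt_trans h2].
Qed.

Section LabelSpec.
Variables (n1 n2 n3 : nat) (sigma : cell -> nat) (B : box) (lam : cell -> nat) (m : nat -> nat).
Hypothesis lamB : LABEL_spec n1 n2 n3 sigma B lam m.

Lemma LABEL_pos t : in_box B t -> cdim t < 3 -> (0 < lam t <-> active n1 n2 n3 B lam t).
Proof.
move=> tB ct; have [h0 h1 _ _] := proj2 lamB _ ct; split.
- by move=> lt0; apply: NNPP => na; rewrite (h0 t tB erefl na) in lt0.
- by move=> ta; have /andP [] := h1 t tB erefl ta.
Qed.

Lemma LABEL_eq t t' : in_box B t -> in_box B t' -> cdim t < 3 -> cdim t' = cdim t ->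
  0 < lam t -> 0 < lam t' ->
  (lam t = lam t' <-> clos_refl_trans cell (class_step n1 n2 n3 B lam (cdim t)) t t').
Proof.
move=> tB t'B ct ct' lt0 lt'0; have [_ _ _ h] := proj2 lamB _ ct.
by apply: h => //; apply/LABEL_pos => //; rewrite ct'.
Qed.

Lemma LABEL_le t : in_box B t -> cdim t < 3 -> 0 < lam t -> lam t <= m (cdim t).
Proof.
move=> tB ct lt0; have [_ h _ _] := proj2 lamB _ ct.
by case/andP: (h t tB erefl (proj1 (LABEL_pos tB ct) lt0)).
Qed.

End LabelSpec.

Section ClassPath.
Variables (n1 n2 n3 : nat) (B : box) (lam : cell -> nat) (j : nat).

Lemma class_stepI a b : in_box B a -> in_box B b -> cdim a = j -> cdim b = j ->
  active n1 n2 n3 B lam a -> active n1 n2 n3 B lam b -> same_theta n1 n2 n3 B lam a b ->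
  cconnected n1 n2 n3 a b -> class_step n1 n2 n3 B lam j a b.
Proof. by move=> *; do 7 split=> //. Qed.

Lemma class_path_same_theta a b :
  clos_refl_trans cell (class_step n1 n2 n3 B lam j) a b -> same_theta n1 n2 n3 B lam a b.
Proof.
elim=> [x y [_ [_ [_ [_ [_ [_ []]]]]]]|x l|x y z _ h1 _ h2 l] //.
by rewrite h1 h2.
Qed.

Lemma class_path_ends a b : clos_refl_trans cell (class_step n1 n2 n3 B lam j) a b ->
  a = b \/ [/\ in_box B a, in_box B b, active n1 n2 n3 B lam a & active n1 n2 n3 B lam b].
Proof.
elim=> [x y [? [? [_ [_ [? [? _]]]]]]|x|x y z _ h1 _ h2]; [by right|by left|].
case: h1 => [->//|[? ? ? ?]]; case: h2 => [<-|[? ? ? ?]]; by [right|left].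
Qed.

End ClassPath.

Lemma cconnected_in_T n1 n2 n3 a b : cconnected n1 n2 n3 a b -> in_T n1 n2 n3 a /\ in_T n1 n2 n3 b.
Proof. by case=> t [_ [? _ _] [? _ _]]. Qed.

Lemma theta_transfer n1 n2 n3 B lam B' lam' u l :
  (forall v, Gamma n1 n2 n3 u v -> [/\ in_box B v, in_box B' v & lam v = lam' v]) ->
  theta n1 n2 n3 B lam u l <-> theta n1 n2 n3 B' lam' u l.
Proof.
move=> H; split=> -[lp [v [hv _ hl hu]]]; split=> //; exists v; have [? ? e] := H v hv.
- split=> // [|v' hv' _ e']; first by rewrite -e.
  by have [? ? e''] := H v' hv'; apply: hu => //; rewrite e''.
- split=> // [|v' hv' _ e']; first by rewrite e.
  by have [? ? e''] := H v' hv'; apply: hu => //; rewrite -e''.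
Qed.

Section Block.
Variables (n1 n2 n3 : nat) (sigma tau : cell -> nat) (mT : nat -> nat).
Variables (B : box) (lam : cell -> nat) (m : nat -> nat).
Hypothesis tauT : LABEL_spec n1 n2 n3 sigma (Tbox n1 n2 n3) tau mT.
Hypothesis lamB : LABEL_spec n1 n2 n3 sigma B lam m.
Hypothesis oddB : odd_box B.

Local Notation Gam := (Gamma n1 n2 n3).
Local Notation inT := (in_T n1 n2 n3).
Local Notation TB := (Tbox n1 n2 n3).
Local Notation thetaB := (theta n1 n2 n3 B lam).
Local Notation thetaT := (theta n1 n2 n3 TB tau).
Local Notation activeB := (active n1 n2 n3 B lam).
Local Notation activeT := (active n1 n2 n3 TB tau).
Local Notation stepB := (class_step n1 n2 n3 B lam).
Local Notation stepT := (class_step n1 n2 n3 TB tau).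

Lemma block_label_global j a b : (forall x y, stepB j x y -> stepT j x y) ->
  j < 3 -> cdim a = j -> cdim b = j -> in_box B a -> in_box B b ->
  lam a = lam b -> 0 < lam a -> tau a = tau b.
Proof.
move=> sub j3 ca cb aB bB eab pa; have pb : 0 < lam b by rewrite -eab.
have /(LABEL_eq lamB aB bB) : cdim a < 3 by rewrite ca.
rewrite ca cb => /(_ erefl pa pb) [/(_ eab) /(clos_rt_mono sub) path _].
have [->//|[aT bT aa ab]] := class_path_ends path.
have a3 : cdim a < 3 by rewrite ca.
have pa' : 0 < tau a by apply/(LABEL_pos tauT aT a3).
have pb' : 0 < tau b by apply/(LABEL_pos tauT bT); rewrite ?cb.
have := LABEL_eq tauT aT bT a3 (_ : cdim b = cdim a) pa' pb'.
by rewrite ca cb => /(_ erefl) [_]; apply.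
Qed.

Lemma tau3_block u v : cdim u = 2 -> in_box B u -> Gam u v ->
  [/\ in_box B v, in_box TB v & lam v = tau v].
Proof.
move=> cu uB uv; have vB := Gamma_odd_box oddB uB uv.
case: (uv) => vT cv _; rewrite cu in cv.
by split=> //; rewrite (proj1 lamB v vB cv) (proj1 tauT v vT cv).
Qed.

Lemma theta2_block u l : cdim u = 2 -> in_box B u -> thetaB u l <-> thetaT u l.
Proof. by move=> cu uB; apply: theta_transfer => v; apply: tau3_block. Qed.

Lemma active2_block u : cdim u = 2 -> in_box B u -> activeB u <-> activeT u.
Proof. by move=> cu uB; split=> -[l hl]; exists l; move: hl; rewrite theta2_block. Qed.

Lemma step2_block a b : in_box B a -> in_box B b -> stepB 2 a b <-> stepT 2 a b.
Proof.
move=> aB bB; split=> -[_ [_ [ca [cb [aa [ab [st cc]]]]]]]; have [aT bT] := cconnected_in_T cc.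
- apply: class_stepI; rewrite -?active2_block // => l.
  by rewrite -!theta2_block.
- apply: class_stepI; rewrite ?active2_block // => l.
  by rewrite !theta2_block.
Qed.

Lemma label2_pos u : cdim u = 2 -> in_box B u -> inT u -> 0 < lam u <-> 0 < tau u.
Proof.
by move=> cu uB uT; rewrite (LABEL_pos lamB uB) ?cu // (LABEL_pos tauT uT) ?cu // active2_block.
Qed.

Lemma label2_global a b : cdim a = 2 -> cdim b = 2 -> in_box B a -> in_box B b ->
  lam a = lam b -> 0 < lam a -> tau a = tau b.
Proof.
move=> ca cb aB bB; apply: (block_label_global _ _ ca cb aB bB) => // x y sxy.
by case: (sxy) => xB [yB _]; apply/step2_block.
Qed.

Lemma label2_block a b : cdim a = 2 -> cdim b = 2 -> in_box B a -> in_box B b ->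
  cconnected n1 n2 n3 a b -> tau a = tau b -> 0 < tau a -> lam a = lam b.
Proof.
move=> ca cb aB bB cab eab pa; have [aT bT] := cconnected_in_T cab.
have pb : 0 < tau b by rewrite -eab.
have /(LABEL_eq tauT aT bT) : cdim a < 3 by rewrite ca.
rewrite ca cb => /(_ erefl pa pb) [/(_ eab) /class_path_same_theta st _].
have /(LABEL_eq lamB aB bB) : cdim a < 3 by rewrite ca.
rewrite ca cb; move/(_ erefl); rewrite !label2_pos // => /(_ pa pb) [_]; apply.
apply/rt_step/step2_block => //.
by apply: class_stepI => //; apply/(LABEL_pos tauT) => //; rewrite ?ca ?cb.
Qed.

Lemma theta1_global_block s l : cdim s = 1 -> in_box B s -> inT s -> thetaT s l ->
  exists u, [/\ Gam s u, tau u = l & thetaB s (lam u)].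
Proof.
move=> cs sB sT [lp [u [su _ ul uniq_u]]].
have cu : cdim u = 2 by rewrite (Gamma_cdim su) cs.
have uB := Gamma_odd_box oddB sB su.
have pu : 0 < lam u by rewrite label2_pos ?ul //; exact: Gamma_in_T su.
exists u; split=> //; split=> //; exists u; split=> // u' su' u'B eu.
have cu' : cdim u' = 2 by rewrite (Gamma_cdim su') cs.
apply: uniq_u => //; first exact: Gamma_in_T su'.
by rewrite -ul; apply: label2_global => //; rewrite eu.
Qed.

Lemma theta1_block_global s l : cdim s = 1 -> in_box B s -> inT s -> thetaB s l ->
  exists u, [/\ Gam s u, lam u = l & thetaT s (tau u)].
Proof.
move=> cs sB sT [lp [u [su uB ul uniq_u]]].
have cu : cdim u = 2 by rewrite (Gamma_cdim su) cs.
have pu : 0 < tau u by rewrite -label2_pos ?ul //; exact: Gamma_in_T su.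
exists u; split=> //; split=> //; exists u; split=> //; first exact: Gamma_in_T su.
move=> u' su' _ eu; have cu' : cdim u' = 2 by rewrite (Gamma_cdim su') cs.
have u'B := Gamma_odd_box oddB sB su'.
by apply: uniq_u => //; rewrite -ul; apply: label2_block => //; [exists s|rewrite eu].
Qed.

Lemma active1_block s : cdim s = 1 -> in_box B s -> inT s -> activeB s <-> activeT s.
Proof.
move=> cs sB sT; split=> -[l hl].
- by have [u [_ _ ?]] := theta1_block_global cs sB sT hl; exists (tau u).
- by have [u [_ _ ?]] := theta1_global_block cs sB sT hl; exists (lam u).
Qed.

(* A reference theta label of a 1-cell is the label of one of its 2-cells, whose block
   label is then a block theta label; equal block thetas bring it back via label2_global. *)
Lemma step1_block a b : stepB 1 a b -> stepT 1 a b.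
Proof.
case=> aB [bB [ca [cb [aa [ab [st cc]]]]]]; have [aT bT] := cconnected_in_T cc.
have transfer x y : in_box B x -> in_box B y -> inT x -> inT y -> cdim x = 1 -> cdim y = 1 ->
    same_theta n1 n2 n3 B lam x y -> forall l, thetaT x l -> thetaT y l.
  move=> xB yB xT yT cx cy sxy l /(theta1_global_block cx xB xT) [u [xu <- hu]].
  have [u' [yu' eu' hu']] := theta1_block_global cy yB yT (proj1 (sxy _) hu).
  have cu : cdim u = 2 by rewrite (Gamma_cdim xu) cx.
  have cu' : cdim u' = 2 by rewrite (Gamma_cdim yu') cy.
  rewrite -(@label2_global u' u) ?eu' //.
  - exact: Gamma_odd_box oddB yB yu'.
  - exact: Gamma_odd_box oddB xB xu.
  - by case: hu.
apply: class_stepI; rewrite -?active1_block // => l; split; first exact: transfer.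
by apply: transfer => // l'; rewrite st.
Qed.

Lemma label1_pos s : cdim s = 1 -> in_box B s -> inT s -> 0 < lam s <-> 0 < tau s.
Proof.
by move=> cs sB sT; rewrite (LABEL_pos lamB sB) ?cs // (LABEL_pos tauT sT) ?cs // active1_block.
Qed.

Lemma label1_global a b : cdim a = 1 -> cdim b = 1 -> in_box B a -> in_box B b ->
  lam a = lam b -> 0 < lam a -> tau a = tau b.
Proof. by move=> ca cb aB bB; apply: (block_label_global step1_block). Qed.

Lemma label0_pos t : cdim t = 0 -> in_box B t -> inT t -> 0 < tau t -> 0 < lam t.
Proof.
move=> ct tB tT /(LABEL_pos tauT tT) [|l [lp [s [ts _ sl uniq_s]]]]; first by rewrite ct.
apply/(LABEL_pos lamB tB); first by rewrite ct.
have cs : cdim s = 1 by rewrite (Gamma_cdim ts) ct.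
have sB := Gamma_odd_box oddB tB ts.
have ps : 0 < lam s by rewrite label1_pos ?sl //; exact: Gamma_in_T ts.
exists (lam s); split=> //; exists s; split=> // s' ts' s'B es.
have cs' : cdim s' = 1 by rewrite (Gamma_cdim ts') ct.
apply: uniq_s => //; first exact: Gamma_in_T ts'.
by rewrite -sl; apply: label1_global => //; rewrite es.
Qed.

End Block.

Definition once2 (a b l : nat) : Prop :=
  0 < l /\ ((a = l /\ b <> l) \/ (b = l /\ a <> l)).

Definition same_dpair (a b c d : nat) : Prop :=
  a <> b /\ ((a = c /\ b = d) \/ (a = d /\ b = c)).

Lemma once2_neq a b l : once2 a b l -> a <> b.
Proof. by case=> _ [[-> h]|[-> h]] e; apply: h. Qed.

Lemma once2_same_dpair a b c d : 0 < a -> 0 < b ->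
  (forall l, once2 a b l <-> once2 c d l) -> a <> b -> same_dpair a b c d.
Proof.
move=> pa pb H ne; split=> //.
have [_ ha] := proj1 (H a) (conj pa (or_introl (conj erefl (fun e => ne (esym e))))).
have [_ hb] := proj1 (H b) (conj pb (or_intror (conj erefl ne))).
by case: ha => [[? ?]|[? ?]]; case: hb => [[? ?]|[? ?]]; subst; tauto.
Qed.

Lemma same_dpair_once2 a b c d : same_dpair a b c d -> forall l, once2 a b l <-> once2 c d l.
Proof. by case=> ne [[-> ->]|[-> ->]] l; rewrite /once2 //; tauto. Qed.

Definition cycle_edge (A B C D i : nat) : nat * nat :=
  nth (A, D) [:: (A, D); (A, B); (B, C); (D, C)] i.

Lemma cycle_edge_twin A B C D i i' i0 :
  let e := cycle_edge A B C D in
  i < 4 -> i' < 4 -> i0 < 4 -> i <> i' ->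
  same_dpair (e i).1 (e i).2 (e i').1 (e i').2 -> (e i0).1 <> (e i0).2 ->
  exists2 i1, i1 < 4 & i1 <> i0 /\ same_dpair (e i0).1 (e i0).2 (e i1).1 (e i1).2.
Proof.
move=> e hi hi' hi0 ne; rewrite /e /same_dpair => hS.
have H : A = C \/ B = D \/ (A = B /\ C = D) \/ (A = D /\ B = C).
  move: hi hi' ne hS; case: i => [|[|[|[|]]]] // _; case: i' => [|[|[|[|]]]] // _ _ /=;
  move=> [n [[? ?]|[? ?]]]; subst; by [left|right; left|right; right; left|right; right; right|].
case: H => [e1|[e1|[[e1 e2]|[e1 e2]]]]; subst; case: i0 hi0 => [|[|[|[|]]]] // _ /= n.
all: first [ by exists 0; do 2 split=> //; (left + right)
           | by exists 1; do 2 split=> //; (left + right)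
           | by exists 2; do 2 split=> //; (left + right)
           | by exists 3; do 2 split=> //; (left + right) ].
Qed.

Lemma one_cell_even_coords s : cdim s = 1 -> exists j k, [/\ j < 3, k < 3, j != k,
  ~~ odd (get j s) & ~~ odd (get k s)] /\ forall i, i < 3 -> ~~ odd (get i s) -> i = j \/ i = k.
Proof.
rewrite cdimE.
case e0: (odd (get 0 s)); case e1: (odd (get 1 s)); case e2: (odd (get 2 s)) => //= _.
- by exists 1, 2; rewrite e1 e2; split=> // -[|[|[|]]] // _; rewrite ?e0 // => _; by [left|right].
- by exists 0, 2; rewrite e0 e2; split=> // -[|[|[|]]] // _; rewrite ?e1 // => _; by [left|right].
- by exists 0, 1; rewrite e0 e1; split=> // -[|[|[|]]] // _; rewrite ?e2 // => _; by [left|right].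
Qed.

Lemma two_cell_even_coord w b i : cdim w = 2 -> b < 3 -> i < 3 ->
  ~~ odd (get b w) -> ~~ odd (get i w) -> i = b.
Proof.
rewrite cdimE; case: b => [|[|[|]]] //; case: i => [|[|[|]]] //;
  by move=> + _ _ /negbTE e1 /negbTE e2; rewrite ?e1 ?e2; case: odd; lia.
Qed.

Lemma half_odd_range x n : odd x -> 1 <= x <= (2 * n).-1 -> 1 <= x.+1./2 <= n.
Proof.
move=> ox; rewrite -[x](odd_double_half x) ox add1n -doubleS doubleK -mul2n -subn1.
by lia.
Qed.

Section TwoCells.
Variables (n1 n2 n3 : nat) (sigma tau : cell -> nat) (mT : nat -> nat).
Hypothesis sigma_seg : segment_label_map n1 n2 n3 sigma.
Hypothesis tauT : LABEL_spec n1 n2 n3 sigma (Tbox n1 n2 n3) tau mT.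

Local Notation Gam := (Gamma n1 n2 n3).
Local Notation inT := (in_T n1 n2 n3).
Local Notation thetaT := (theta n1 n2 n3 (Tbox n1 n2 n3) tau).
Local Notation activeT := (active n1 n2 n3 (Tbox n1 n2 n3) tau).

Lemma tau3_pos v : inT v -> cdim v = 3 -> 0 < tau v.
Proof.
move=> vT cv; rewrite (proj1 tauT v vT cv); apply: (proj1 sigma_seg).
have : [/\ odd (get 0 v), odd (get 1 v) & odd (get 2 v)].
  by move: cv; rewrite cdimE; case: odd; case: odd; case: odd.
move/in_box_get: vT => vT [o0 o1 o2].
by apply/and3P; split; apply: half_odd_range; [exact: o0|exact: (vT 0)|exact: o1
  |exact: (vT 1)|exact: o2|exact: (vT 2)].
Qed.

Lemma Gamma2P w b : inT w -> cdim w = 2 -> b < 3 -> ~~ odd (get b w) ->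
  forall v, Gam w v <-> v = upd b w (get b w).+1 \/ v = upd b w (get b w).-1.
Proof.
move=> wT cw b3 ev v; split; last by have [? ?] := Gamma_upd wT b3 ev; case=> ->.
case/GammaP=> i i3 [evi vi]; have eib := two_cell_even_coord cw b3 i3 ev evi; subst i.
by case: vi => [->|[_ ->]]; [left|right].
Qed.

Lemma theta_two_neighbours u v1 v2 l : v1 <> v2 -> (forall v, Gam u v <-> v = v1 \/ v = v2) ->
  thetaT u l <-> once2 (tau v1) (tau v2) l.
Proof.
move=> n12 nb; have g1 : Gam u v1 by apply/nb; left.
have g2 : Gam u v2 by apply/nb; right.
split.
- case=> lp [v [/nb [->|->] _ el uniq_v]]; subst l; split=> //.
  + by left; split=> // e; apply: n12; symmetry; apply: uniq_v => //; case: g2.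
  + by right; split=> // e; apply: n12; apply: uniq_v => //; case: g1.
- case=> lp [[e1 ne2]|[e2 ne1]]; split=> //.
  + exists v1; split=> //; first by case: g1.
    by move=> v' /nb [->|->] // _ /ne2.
  + exists v2; split=> //; first by case: g2.
    by move=> v' /nb [->|->] // _ /ne1.
Qed.

Lemma theta2_T w b l : inT w -> cdim w = 2 -> b < 3 -> ~~ odd (get b w) ->
  thetaT w l <-> once2 (tau (upd b w (get b w).+1)) (tau (upd b w (get b w).-1)) l.
Proof.
move=> wT cw b3 ev; apply: theta_two_neighbours; last exact: Gamma2P.
move/(congr1 (get b)); rewrite !get_upd_id //.
by have oT := Tbox_odd wT; have := even_coord_pos oT wT b3 ev; lia.
Qed.

Section OneCell.
Variables (s : cell) (j k : nat).
Hypotheses (sT : inT s) (cs : cdim s = 1) (j3 : j < 3) (k3 : k < 3) (njk : j != k).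
Hypotheses (ej : ~~ odd (get j s)) (ek : ~~ odd (get k s)).
Hypothesis even_jk : forall i, i < 3 -> ~~ odd (get i s) -> i = j \/ i = k.

Local Notation sj := (get j s).
Local Notation sk := (get k s).

(* The four 2-cells [face i] around s and the four 3-cells [corner a b] around s form a
   square: face i lies between the two corners whose labels are [face_edge i], and
   consecutive faces share a corner. *)
Definition face (i : nat) : cell :=
  nth s [:: upd j s sj.+1; upd k s sk.+1; upd j s sj.-1; upd k s sk.-1] i.

Definition corner (a b : nat) : cell := upd k (upd j s a) b.

Definition face_edge (i : nat) : nat * nat :=
  cycle_edge (tau (corner sj.+1 sk.+1)) (tau (corner sj.-1 sk.+1))
             (tau (corner sj.-1 sk.-1)) (tau (corner sj.+1 sk.-1)) i.

Lemma get_k_updj a : get k (upd j s a) = sk.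
Proof. by rewrite get_upd // eq_sym (negbTE njk). Qed.

Lemma get_j_updk b : get j (upd k s b) = sj.
Proof. by rewrite get_upd // (negbTE njk). Qed.

Lemma Gamma_face i : i < 4 -> Gam s (face i).
Proof.
have [gj1 gj2] := Gamma_upd sT j3 ej; have [gk1 gk2] := Gamma_upd sT k3 ek.
by case: i => [|[|[|[|]]]].
Qed.

Lemma Gamma_faceP w : Gam s w -> exists2 i, i < 4 & w = face i.
Proof.
case/GammaP=> i i3 [evi wi]; case: (even_jk i3 evi) => ei; subst i; case: wi => [->|[_ ->]].
- by exists 0.
- by exists 2.
- by exists 1.
- by exists 3.
Qed.

Lemma face_inj i i' : i < 4 -> i' < 4 -> face i = face i' -> i = i'.
Proof.
have pj := even_coord_pos (Tbox_odd sT) sT j3 ej.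
have pk := even_coord_pos (Tbox_odd sT) sT k3 ek.
case: i => [|[|[|[|]]]] //; case: i' => [|[|[|[|]]]] // _ _ /= e;
  move: (congr1 (get j) e) (congr1 (get k) e);
  rewrite ?get_upd_id ?get_k_updj ?get_j_updk //; lia.
Qed.

Lemma face_cdim i : i < 4 -> cdim (face i) = 2.
Proof. by move/Gamma_face/Gamma_cdim; rewrite cs. Qed.

Lemma theta_face i l : i < 4 -> thetaT (face i) l <-> once2 (face_edge i).1 (face_edge i).2 l.
Proof.
move=> i4; have fT := Gamma_in_T (Gamma_face i4); have cf := face_cdim i4.
case: i i4 fT cf => [|[|[|[|]]]] // _; rewrite /face /= => fT cf.
- by rewrite (theta2_T l fT cf k3) ?get_k_updj.
- by rewrite (theta2_T l fT cf j3) ?get_j_updk // /corner !(updC s _ _ j3 k3 njk).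
- by rewrite (theta2_T l fT cf k3) ?get_k_updj.
- by rewrite (theta2_T l fT cf j3) ?get_j_updk // /corner !(updC s _ _ j3 k3 njk).
Qed.

Lemma face_edge_pos i : 0 < (face_edge i).1 /\ 0 < (face_edge i).2.
Proof.
have corner_pos f : f < 4 -> ~~ odd f ->
    0 < tau (upd k (face f) sk.+1) /\ 0 < tau (upd k (face f) sk.-1).
  move=> f4 ef; have fT := Gamma_in_T (Gamma_face f4); have cf := face_cdim f4.
  have efk : get k (face f) = sk.
    by case: f f4 ef {fT cf} => [|[|[|[|]]]] // _ _; exact: get_k_updj.
  have ek' : ~~ odd (get k (face f)) by rewrite efk.
  have [g1 g2] := Gamma_upd fT k3 ek'; rewrite efk in g1 g2.
  by split; apply: tau3_pos; rewrite ?(Gamma_in_T g1) ?(Gamma_in_T g2)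
    ?(Gamma_cdim g1) ?(Gamma_cdim g2) ?cf.
have [pA pD] := corner_pos 0 erefl erefl; have [pB pC] := corner_pos 2 erefl erefl.
by case: i => [|[|[|[|i]]]]; rewrite /face_edge /cycle_edge /= ?nth_nil; split;
  first [exact: pA|exact: pB|exact: pC|exact: pD].
Qed.

Lemma face_active f : f < 4 -> 0 < tau (face f) <-> activeT (face f).
Proof.
move=> f4; apply: (LABEL_pos tauT); first exact: Gamma_in_T (Gamma_face f4).
by rewrite face_cdim.
Qed.

Lemma face_edge_neq f : f < 4 -> 0 < tau (face f) -> (face_edge f).1 <> (face_edge f).2.
Proof. by move=> f4 /(face_active f4) [l /(theta_face l f4) /once2_neq]. Qed.

Lemma face_tau_eq f f' : f < 4 -> f' < 4 -> 0 < tau (face f) -> 0 < tau (face f') ->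
  tau (face f) = tau (face f') <->
  clos_refl_trans cell (class_step n1 n2 n3 (Tbox n1 n2 n3) tau 2) (face f) (face f').
Proof.
move=> f4 f'4 pf pf'; have fT g : g < 4 -> inT (face g) by move/Gamma_face/Gamma_in_T.
rewrite -(face_cdim f4); apply: (LABEL_eq tauT) (fT f f4) (fT f' f'4) _ _ pf pf'.
- by rewrite face_cdim.
- by rewrite !face_cdim.
Qed.

Lemma face_same_theta_tau f f' : f < 4 -> f' < 4 -> 0 < tau (face f) ->
  same_theta n1 n2 n3 (Tbox n1 n2 n3) tau (face f) (face f') -> tau (face f) = tau (face f').
Proof.
move=> f4 f'4 pf st; have /(face_active f4) af := pf.
have af' : activeT (face f') by case: af => l /st; exists l.
have pf' : 0 < tau (face f') by apply/(face_active f'4).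
apply/(face_tau_eq f4 f'4 pf pf')/rt_step/class_stepI => //;
  try exact: Gamma_in_T (Gamma_face _); try exact: face_cdim.
by exists s; split=> //; apply: Gamma_face.
Qed.

(* If two faces shared a positive label, their corner pairs would coincide; the 4-cycle
   structure then gives every non-degenerate face a twin with the same theta, so the label
   making s active would occur twice around s. *)
Lemma face_tau_inj i i' : activeT s -> i < 4 -> i' < 4 ->
  0 < tau (face i) -> tau (face i') = tau (face i) -> i' = i.
Proof.
move=> [l0 [l0p [w [sw _ wl0 uniq_w]]]] i4 i'4 pi e; apply: NNPP => ne.
have [i0 i04 ew] := Gamma_faceP sw; subst w.
have pi0 : 0 < tau (face i0) by rewrite wl0.
have dpair : same_dpair (face_edge i).1 (face_edge i).2 (face_edge i').1 (face_edge i').2.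
  have [pa pb] := face_edge_pos i; apply: once2_same_dpair => //; last exact: face_edge_neq.
  have /(face_tau_eq i4 i'4 pi) [+ _] : 0 < tau (face i') by rewrite e.
  by move=> /(_ (esym e)) /class_path_same_theta st l; rewrite -!theta_face.
have [i1 i14 [ne10 dpair01]] :=
  cycle_edge_twin i4 i'4 i04 (fun e => ne (esym e)) dpair (face_edge_neq i04 pi0).
have e01 : tau (face i0) = tau (face i1).
  by apply: face_same_theta_tau => // l; rewrite !theta_face //; apply: same_dpair_once2.
apply: ne10; apply: face_inj => //; apply: uniq_w; first exact: Gamma_face.
- exact: Gamma_in_T (Gamma_face i14).
- by rewrite -e01.
Qed.

End OneCell.

Lemma Gamma1_tau_inj s u u' : cdim s = 1 -> inT s -> activeT s ->
  Gam s u -> Gam s u' -> 0 < tau u -> tau u' = tau u -> u' = u.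
Proof.
move=> cs sT act su su' pu e.
have [j [k [[j3 k3 njk ej ek] even_jk]]] := one_cell_even_coords cs.
have [i i4 eu] := Gamma_faceP even_jk su; have [i' i'4 eu'] := Gamma_faceP even_jk su'.
have inj := face_tau_inj sT cs j3 k3 njk ej ek even_jk act i4 i'4.
by rewrite eu' eu inj -?eu -?eu'.
Qed.

End TwoCells.

Lemma sum_nat_recr_le (f : nat -> nat) k k' : k < k' ->
  \sum_(0 <= i < k) f i + f k <= \sum_(0 <= i < k') f i.
Proof.
by move=> kk'; rewrite -big_nat_recr // [X in _ <= X](@big_cat_nat _ _ _ k.+1) //= leq_addr.
Qed.

(* Step 2 of the method shifts the labels of block k past all labels of earlier blocks. *)
Lemma offset_inj (f : nat -> nat) k k' x x' : 0 < x <= f k -> 0 < x' <= f k' ->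
  \sum_(0 <= i < k) f i + x = \sum_(0 <= i < k') f i + x' -> k = k'.
Proof.
move=> hx hx' e; case: (ltngtP k k') => // kk'.
- by have := sum_nat_recr_le f kk'; lia.
- by have := sum_nat_recr_le f kk'; lia.
Qed.

Section Blockwise.
Variables (n1 n2 n3 : nat) (sigma tau : cell -> nat) (mT : nat -> nat).
Variables (bl : seq box) (lams : nat -> cell -> nat) (ms : nat -> nat -> nat).
Variables (rep : nat -> nat -> nat) (blk : cell -> nat).
Hypothesis sigma_seg : segment_label_map n1 n2 n3 sigma.
Hypothesis tauT : LABEL_spec n1 n2 n3 sigma (Tbox n1 n2 n3) tau mT.

Local Notation inT := (in_T n1 n2 n3).
Local Notation TB := (Tbox n1 n2 n3).
Local Notation activeT := (active n1 n2 n3 TB tau).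
Local Notation K := (size bl).
Local Notation blockB k := (nth box0 bl k).
Local Notation off k j := (\sum_(0 <= i < k) ms i j).
Local Notation L k t := (if 0 < lams k t then off k (cdim t) + lams k t else 0).
Local Notation unite j := (fun a b => exists t k k',
      cdim t = j /\ k < K /\ k' < K /\ in_box (blockB k) t /\
      in_box (blockB k') t /\ 0 < lams k t /\ 0 < lams k' t /\
      a = L k t /\ b = L k' t).
Local Notation Erel j := (clos_refl_sym_trans nat (unite j)).
Local Notation c3 := (fun t => let v := L (blk t) t in
              if (cdim t == 1) || (cdim t == 2) then
                (if v == 0 then 0 else rep (cdim t) v) else v).

Hypothesis bl_odd : forall k, k < K -> odd_box (blockB k).
Hypothesis lamsB : forall k, k < K -> LABEL_spec n1 n2 n3 sigma (blockB k) (lams k) (ms k).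
Hypothesis repP : forall j l, (j == 1) || (j == 2) -> 0 < l ->
  Erel j l (rep j l) /\ forall l', 0 < l' -> Erel j l l' -> rep j l = rep j l'.
Hypothesis blkP : forall t, inT t -> cdim t < 3 -> blk t < K /\ in_box (blockB (blk t)) t.

Definition represents (j a g : nat) : Prop := exists t k,
  [/\ cdim t = j, k < K, in_box (blockB k) t, 0 < lams k t & a = L k t /\ tau t = g].

Definition same_rep (j a b : nat) : Prop := forall g, represents j a g <-> represents j b g.

Lemma represents_fun j a g g' : (j = 1 \/ j = 2) -> represents j a g -> represents j a g' -> g = g'.
Proof.
move=> j12 [t [k [ct k3 tB pt [ea <-]]]] [t' [k' [ct' k'3 t'B pt' [ea' <-]]]].
rewrite pt in ea; rewrite pt' in ea'.
have c3j : j < 3 by case: j12 => ->.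
have le := LABEL_le (lamsB k3) tB (_ : cdim t < 3) pt.
have le' := LABEL_le (lamsB k'3) t'B (_ : cdim t' < 3) pt'.
rewrite ct in le ea; rewrite ct' in le' ea'.
have ekk : k = k'.
  apply: (@offset_inj (ms^~ j) _ _ (lams k t) (lams k' t')); rewrite -?ea -?ea' //.
  - by rewrite pt le.
  - by rewrite pt' le'.
subst k'; have el : lams k t = lams k t' by move: ea'; rewrite ea => /addnI.
case: j12 => ej; rewrite ej in ct ct'.
- exact (label1_global tauT (lamsB k3) (bl_odd k3) ct ct' tB t'B el pt).
- exact (label2_global tauT (lamsB k3) (bl_odd k3) ct ct' tB t'B el pt).
Qed.

Lemma Erel_same_rep j a b : (j = 1 \/ j = 2) -> Erel j a b -> same_rep j a b.
Proof.
move=> j12; elim=> [x y xy|x|x y _ h|x y z _ h1 _ h2] g.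
- case: xy => t [k [k' [ct [k3 [k'3 [tB [tB' [p [p' [ex ey]]]]]]]]]].
  have rx : represents j x (tau t) by exists t, k; split.
  have ry : represents j y (tau t) by exists t, k'; split.
  by split=> h; [rewrite (represents_fun j12 h rx)|rewrite (represents_fun j12 h ry)].
- by [].
- by rewrite h.
- by rewrite h1 h2.
Qed.

Lemma represents0 j g : ~ represents j 0 g.
Proof.
case=> t [k [_ _ _ p [+ _]]]; rewrite p => /esym /eqP; rewrite addn_eq0 => /andP [_ /eqP z].
by rewrite z in p.
Qed.

Lemma step3_label t j : inT t -> cdim t = j -> (j = 1 \/ j = 2) ->
  (0 < c3 t <-> 0 < tau t) /\ (0 < c3 t -> forall g, represents j (c3 t) g <-> g = tau t).
Proof.
move=> tT ct j12; have j3 : cdim t < 3 by rewrite ct; case: j12 => ->.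
have [k3 tB] := blkP tT j3; set k := blk t in k3 tB *.
have lam_pos : 0 < lams k t <-> 0 < tau t.
  case: j12 => ej; rewrite ej in ct.
  - exact (label1_pos tauT (lamsB k3) (bl_odd k3) ct tB tT).
  - exact (label2_pos tauT (lamsB k3) (bl_odd k3) ct tB tT).
have j12b : (cdim t == 1) || (cdim t == 2) by rewrite ct; case: j12 => ->.
rewrite /= j12b; case: (posnP (lams k t)) => [z|p].
  by move: lam_pos; rewrite z.
have Lp : 0 < off k (cdim t) + lams k t by rewrite addn_gt0 p orbT.
rewrite (negbTE (lt0n_neq0 Lp)) ct.
have j12b' : (j == 1) || (j == 2) by rewrite -ct.
have [Erep _] := repP j12b' Lp.
have same := Erel_same_rep j12 Erep.
have rl : represents j (off k (cdim t) + lams k t) (tau t) by exists t, k; split=> //; rewrite p.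
have rr : represents j (rep j (off k (cdim t) + lams k t)) (tau t) by apply/same.
have rp : 0 < rep j (off k (cdim t) + lams k t).
  by rewrite lt0n; apply/eqP => e; rewrite e in rr; exact: represents0 rr.
rewrite ct in same rl rp.
split; first by split=> _; [exact/lam_pos|exact: rp].
move=> _ g; rewrite -same; split; last by move->.
by move/(represents_fun j12)/(_ rl).
Qed.

Lemma step3_label0_pos t : inT t -> cdim t = 0 -> 0 < tau t -> 0 < c3 t.
Proof.
move=> tT ct pt; have t3 : cdim t < 3 by rewrite ct.
have [k3 tB] := blkP tT t3.
have p := label0_pos tauT (lamsB k3) (bl_odd k3) ct tB tT pt.
by rewrite /= ct /= p addn_gt0 p orbT.
Qed.

(* This turns the Step 4 criterion (bounding the same 2-cell labels) into equal thetas. *)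
Lemma theta1_bound2 x : inT x -> cdim x = 1 -> 0 < c3 x -> forall l,
  theta n1 n2 n3 TB tau x l <-> exists a, bound2 n1 n2 n3 c3 x a /\ represents 2 a l.
Proof.
move=> xT cx px l; have [[posx _] _] := step3_label xT cx (or_introl erefl).
have ax : activeT x by apply/(LABEL_pos tauT xT); rewrite ?cx ?posx.
split.
- case=> lp [u [xu _ ul _]]; have cu : cdim u = 2 by rewrite (Gamma_cdim xu) cx.
  have [[_ posu] repu] := step3_label (Gamma_in_T xu) cu (or_intror erefl).
  have pcu : 0 < c3 u by apply: posu; rewrite ul.
  by exists (c3 u); split; [exists u|apply/(repu pcu)].
- case=> a [[u [xu pu <-]] ra]; have cu : cdim u = 2 by rewrite (Gamma_cdim xu) cx.
  have uT := Gamma_in_T xu.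
  have [[posu _] repu] := step3_label uT cu (or_intror erefl).
  have -> : l = tau u by apply/(repu pu).
  split; first exact: posu.
  exists u; split=> // u' xu' _ eu'.
  exact: (Gamma1_tau_inj sigma_seg tauT cx xT ax xu xu' (posu pu) eu').
Qed.

Definition merge_sound (E : nat -> nat -> Prop) : Prop := forall a b, E a b -> same_rep 1 a b.

Lemma mergepair_same_rep E t0 a b : inT t0 -> cdim t0 = 0 ->
  mergepair n1 n2 n3 c3 E t0 a b -> same_rep 1 a b.
Proof.
move=> t0T ct0 [s [s' [[t0s ps _] [[t0s' ps' _] [_ [-> [-> bound_eq]]]]]]].
have cs : cdim s = 1 by rewrite (Gamma_cdim t0s) ct0.
have cs' : cdim s' = 1 by rewrite (Gamma_cdim t0s') ct0.
have sT := Gamma_in_T t0s; have s'T := Gamma_in_T t0s'.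
have [[poss _] reps] := step3_label sT cs (or_introl erefl).
have [[poss' _] reps'] := step3_label s'T cs' (or_introl erefl).
have st : same_theta n1 n2 n3 TB tau s s'.
  move=> l; rewrite (theta1_bound2 sT cs ps) (theta1_bound2 s'T cs' ps').
  by split=> -[c [bc rc]]; exists c; split=> //; apply/bound_eq.
have step : class_step n1 n2 n3 TB tau 1 s s'.
  apply: class_stepI => //; try by apply/(LABEL_pos tauT); rewrite ?cs ?cs' ?poss ?poss'.
  by exists t0; split.
have s3 : cdim s < 3 by rewrite cs.
have ecs : cdim s' = cdim s by rewrite cs cs'.
have [_ path_eq] := LABEL_eq tauT sT s'T s3 ecs (poss ps) (poss' ps').
have e : tau s = tau s' by apply: path_eq; rewrite cs; exact: rt_step.
by move=> g; apply: (iff_trans (reps ps g)); rewrite e; apply: iff_sym; apply: reps' ps' g.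
Qed.
Lemma Enext_sound E t0 : merge_sound E -> inT t0 -> cdim t0 = 0 ->
  merge_sound (Enext n1 n2 n3 c3 E t0).
Proof.
move=> soundE t0T ct0 a b; elim=> [x y [h|h]|x|x y _ h|x y z _ h1 _ h2] g.
- exact: soundE.
- exact: mergepair_same_rep t0T ct0 h g.
- by [].
- by rewrite h.
- by rewrite h1 h2.
Qed.

(* Sound merges never make two 1-cells around t0 share a label, so the 1-cell that made t0
   active in the reference labeling still carries a label occurring once. *)
Lemma active0_sound E t0 : merge_sound E -> inT t0 -> cdim t0 = 0 -> 0 < tau t0 ->
  active0 n1 n2 n3 c3 E t0.
Proof.
move=> soundE t0T ct0 pt0; have t03 : cdim t0 < 3 by rewrite ct0.
have [l [lp [s [t0s _ sl uniq_s]]]] := proj1 (LABEL_pos tauT t0T t03) pt0.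
have cs : cdim s = 1 by rewrite (Gamma_cdim t0s) ct0.
have [[_ poss] reps] := step3_label (Gamma_in_T t0s) cs (or_introl erefl).
have ps : 0 < c3 s by apply: poss; rewrite sl.
exists s; split=> // s' t0s' ps' Ess'.
have cs' : cdim s' = 1 by rewrite (Gamma_cdim t0s') ct0.
have [_ reps'] := step3_label (Gamma_in_T t0s') cs' (or_introl erefl).
have /(reps' ps') e : represents 1 (c3 s') (tau s) by apply/(soundE _ _ Ess')/(reps ps).
by apply: uniq_s => //; [exact: Gamma_in_T t0s'|rewrite -e].
Qed.

Lemma step4_notin E lab ord lab' t :
  step4 n1 n2 n3 c3 E lab ord lab' -> t \notin ord -> lab' t = lab t.
Proof.
elim=> {E lab ord lab'} [//|E lab t0 ord v lab' _ _ _ _ IH].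
by rewrite in_cons negb_or => /andP [nt nord]; rewrite IH // (negbTE nt).
Qed.

Lemma step4_keeps_pos E lab ord lab' : step4 n1 n2 n3 c3 E lab ord lab' ->
  merge_sound E -> uniq ord -> (forall x, x \in ord -> inT x /\ cdim x = 0) ->
  forall t, t \in ord -> 0 < tau t -> lab' t = lab t.
Proof.
elim=> {E lab ord lab'} [//|E lab t0 ord v lab' keep1 _ keep2 run IH].
move=> soundE /andP [t0ord uniq_ord] ordP t tord pt.
have [t0T ct0] := ordP t0 (mem_head _ _).
have ordP' x : x \in ord -> inT x /\ cdim x = 0 by move=> xo; apply: ordP; rewrite in_cons xo orbT.
case: (eqVneq t t0) => [et | ne].
- rewrite et (step4_notin run t0ord) eqxx; rewrite et in pt.
  case: (classic (merged n1 n2 n3 c3 E t0)) => mt0; last exact: keep2.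
  by apply: keep1 => //; apply: active0_sound => //; exact: Enext_sound.
- move: tord; rewrite in_cons (negbTE ne) /= => tord.
  by rewrite (IH (Enext_sound soundE t0T ct0) uniq_ord ordP' t tord pt) (negbTE ne).
Qed.

End Blockwise.

Theorem proposition6 (n1 n2 n3 : nat) (sigma : cell -> nat)
    (a1 a2 a3 : seq nat) (tau : cell -> nat) (mT : nat -> nat)
    (tau' : cell -> nat) :
  segment_label_map n1 n2 n3 sigma ->
  valid_breaks n1 a1 -> valid_breaks n2 a2 -> valid_breaks n3 a3 ->
  LABEL_spec n1 n2 n3 sigma (Tbox n1 n2 n3) tau mT ->
  blockwise_output n1 n2 n3 sigma a1 a2 a3 tau' ->
  forall t, in_T n1 n2 n3 t -> cdim t = 0 -> tau t <> 0 -> tau' t <> 0.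
Proof.
move=> sigma_seg [_ _ _ o1] [_ _ _ o2] [_ _ _ o3] tauT
  [bl [lams [ms [rep [blk [ord /= [blP [lamsB [repP [blkP [uniq_ord [ordP run]]]]]]]]]]]] t tT ct.
move=> /eqP; rewrite -lt0n => pt.
have bl_odd k : k < size bl -> odd_box (nth box0 bl k).
  by move=> kbl; apply: (blocks_odd o1 o2 o3); rewrite -(perm_mem blP) mem_nth.
have ordP' x : x \in ord -> in_T n1 n2 n3 x /\ cdim x = 0 by rewrite ordP => /andP [? /eqP].
have tord : t \in ord by rewrite ordP tT ct.
have sound0 : merge_sound tau bl lams ms eq by move=> a b ->.
rewrite (step4_keeps_pos sigma_seg tauT bl_odd lamsB repP blkP run sound0 uniq_ord ordP' tord pt).
by apply/eqP; rewrite -lt0n; exact: (step3_label0_pos rep tauT bl_odd lamsB blkP tT ct pt).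
Qed.
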